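(* Let $\mathbf C$ be a clone $\tau$-algebra and let $c\in C$ be $n$-central for some $n$. Then $c$ has finite dimension and $\gamma(c)\le n$.
   Context: A clone $\tau$-algebra is an algebra $\mathbf C=(C,\sigma^{\mathbf C}\ (\sigma\in\tau),q_n^{\mathbf C}\ (n\ge0),\mathsf e_i^{\mathbf C}\ (i\ge1))$ with $\mathsf e_i$ nullary, $q_n$ of arity $n+1$, satisfying: (C1) $q_n(\mathsf e_i,x_1,\dots,x_n)=x_i$ ($1\le i\le n$); (C2) $q_n(\mathsf e_j,x_1,\dots,x_n)=\mathsf e_j$ ($j>n$); (C3) $q_n(x,\mathsf e_1,\dots,\mathsf e_n)=x$; (C4) $q_k(x,y_1,\dots,y_k)=q_n(x,y_1,\dots,y_k,\mathsf e_{k+1},\dots,\mathsf e_n)$ ($n>k$); (C5) $q_n(q_n(x,\mathbf y),\mathbf z)=q_n(x,q_n(y_1,\mathbf z),\dots,q_n(y_n,\mathbf z))$; (C6) $q_n(\sigma(x_1,\dots,x_k),\mathbf y)=\sigma(q_n(x_1,\mathbf y),\dots,q_n(x_k,\mathbf y))$ for $\sigma\in\tau$ of arity $k$. An element $a$ is independent of $\mathsf e_n$ if $q_n(a,\mathsf e_1,\dots,\mathsf e_{n-1},\mathsf e_{n+1})=a$, dependent otherwise; $\gamma(a)$ is $\omega$ if $a$ depends on infinitely many $\mathsf e_i$, $0$ if on none, otherwise the largest $i$ with $a$ dependent on $\mathsf e_i$; $a$ has finite dimension if $\gamma(a)<\omega$. For $a,b\in C$, $\theta(a,b)$ is the smallest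 congruence containing $(a,b)$. An element $c$ is $n$-central if $\theta(c,\mathsf e_1),\dots,\theta(c,\mathsf e_n)$ is an $n$-tuple of complementary factor congruences: their intersection is the identity and for all $a_1,\dots,a_n\in C$ there is a unique $u$ with $a_i\,\theta(c,\mathsf e_i)\,u$ for all $i$; equivalently, $(a_1,\dots,a_n)\mapsto q_n(c,a_1,\dots,a_n)$ is a homomorphism $\mathbf C^n\to\mathbf C$ satisfying $q_n(c,x,\dots,x)=x$ and $q_n(c,q_n(c,x_{11},\dots,x_{1n}),\dots,q_n(c,x_{n1},\dots,x_{nn}))=q_n(c,x_{11},\dots,x_{nn})$. *)

From mathcomp Require Import all_boot.
Set Implicit Arguments. Unset Strict Implicit. Unset Printing Implicit Defensive.

Record signature := Signature { sym : Type; arity : sym -> nat }.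

(* Indexing convention: the paper's constant e_i (i >= 1) is [ce A (i-1)],
   i.e. [ce A k] is e_{k+1}.  Tuples of length n are functions 'I_n -> C,
   with entry (i : 'I_n) playing the role of the paper's (i+1)-th entry. *)

Definition pad (C : Type) (e : nat -> C) (k n : nat) (y : 'I_k -> C) : 'I_n -> C :=
  fun i => oapp y (e (val i)) (insub (val i) : option 'I_k).

Record clone_alg (tau : signature) := CloneAlg {
  carrier :> Type;
  op : forall s : sym tau, ('I_(arity s) -> carrier) -> carrier;
  q : forall n : nat, carrier -> ('I_n -> carrier) -> carrier;
  ce : nat -> carrier;
  ax_C1 : forall n (i : 'I_n) (x : 'I_n -> carrier), q (ce i) x = x i;
  ax_C2 : forall n j (x : 'I_n -> carrier), n <= j -> q (ce j) x = ce j;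
  ax_C3 : forall n (x : carrier), q x (fun i : 'I_n => ce i) = x;
  ax_C4 : forall k n (x : carrier) (y : 'I_k -> carrier),
      k < n -> q x y = q x (@pad carrier ce k n y);
  ax_C5 : forall n (x : carrier) (y z : 'I_n -> carrier),
      q (q x y) z = q x (fun i => q (y i) z);
  ax_C6 : forall (s : sym tau) n (x : 'I_(arity s) -> carrier) (y : 'I_n -> carrier),
      q (op x) y = op (fun j => q (x j) y)
}.

Section Defs.
Variables (tau : signature) (A : clone_alg tau).

(* a congruence of the clone tau-algebra (nullary e_i impose no condition) *)
Definition congruence (R : A -> A -> Prop) : Prop :=
  [/\ (forall x, R x x), (forall x y, R x y -> R y x),
      (forall x y z, R x y -> R y z -> R x z),
      (forall (s : sym tau) (x y : 'I_(arity s) -> A),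
          (forall j, R (x j) (y j)) -> R (op x) (op y)) &
      (forall n (x x' : A) (y y' : 'I_n -> A),
          R x x' -> (forall i, R (y i) (y' i)) -> R (q x y) (q x' y'))].

Definition theta (a b : A) : A -> A -> Prop :=
  fun x y => forall R, congruence R -> R a b -> R x y.

(* c is n-central: theta(c,e_1),...,theta(c,e_n) are complementary factor congruences *)
Definition central (n : nat) (c : A) : Prop :=
  (forall x y : A, (forall i : 'I_n, theta c (ce A i) x y) -> x = y) /\
  (forall a : 'I_n -> A, exists! u : A, forall i : 'I_n, theta c (ce A i) (a i) u).

Definition indep (a : A) (k : nat) : Prop :=
  q a (fun i : 'I_k => if val i == k.-1 then ce A k else ce A i) = a.

Definition dependent (a : A) (k : nat) : Prop := 0 < k /\ ~ indep a k.

Definition finite_dim (a : A) : Prop :=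
  exists N, forall k, dependent a k -> k <= N.

(* for a of finite dimension, gamma(a) <= n: every e_k a depends on has k <= n
   (gamma(a) = largest such k, or 0 if none) *)
Definition gamma_le (a : A) (n : nat) : Prop :=
  forall k, dependent a k -> k <= n.

End Defs.

From mathcomp Require Import all_boot.
Set Implicit Arguments. Unset Strict Implicit. Unset Printing Implicit Defensive.

(* If c is n-central, then c θ(c,e_i) e_i for every i <= n, so applying a
   substitution that fixes e_1, ..., e_n to c gives an element that is
   θ(c,e_i)-related to c for every i; since these congruences intersect to the
   identity, c is fixed.  The substitution e_k -> e_{k+1} witnessing
   dependence on e_k fixes e_1, ..., e_n as soon as k > n. *)

Section CentralDimension.
Variables (tau : signature) (A : clone_alg tau).

Lemma theta_congruence (a b : A) : congruence (theta a b).
Proof.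
split.
- by move=> x R RC _; case: RC.
- move=> x y xy R RC Rab; case: (RC) => _ Rs _ _ _.
  exact: Rs (xy R RC Rab).
- move=> x y z xy yz R RC Rab; case: (RC) => _ _ Rt _ _.
  exact: Rt (xy R RC Rab) (yz R RC Rab).
- move=> s x y xy R RC Rab; case: (RC) => _ _ _ Rop _.
  by apply: Rop => j; apply: xy.
- move=> m x x' y y' xx' yy' R RC Rab; case: (RC) => _ _ _ _ Rq.
  by apply: Rq => [|i]; [apply: xx' | apply: yy'].
Qed.

Lemma central_q_fixed n (c : A) k (s : 'I_k -> A) :
  central n c -> (forall i : 'I_n, q (ce A i) s = ce A i) -> q c s = c.
Proof.
move=> [sepc _] sfix; apply: sepc => i.
have [thR thS thT _ thQ] := theta_congruence c (ce A i).
have cei : theta c (ce A i) c (ce A i) by [].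
apply: (thT _ (ce A i)); last exact: thS.
rewrite -{2}(sfix i); exact: thQ cei (fun j => thR (s j)).
Qed.

Lemma central_indep n (c : A) k : central n c -> n < k -> indep c k.
Proof.
move=> cc ltnk; apply: central_q_fixed cc _ => i.
have ltik : i < k := ltn_trans (ltn_ord i) ltnk.
rewrite (ax_C1 (Ordinal ltik)) /=; case: eqP => // eik.
by move: ltnk; rewrite -(ltn_predK ltik) -eik ltnS leqNgt ltn_ord.
Qed.

Lemma central_gamma_le n (c : A) : central n c -> gamma_le c n.
Proof.
move=> cc k [_ depk]; rewrite leqNgt; apply/negP => ltnk.
exact: depk (central_indep cc ltnk).
Qed.

End CentralDimension.

Theorem lemma11p1 (tau : signature) (A : clone_alg tau) (n : nat) (c : A) :
  central n c -> finite_dim c /\ gamma_le c n.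
Proof.
move=> cc; have gc := central_gamma_le cc.
by split; first exists n.
Qed.
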